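(* Let $n\ge m\ge 0$ be integers with $n-m\equiv 1 \pmod 2$. Then $$\int_{-\infty}^{\infty} f_n(x) f_m(x)\,dx = \frac{1}{2}\binom{n+m+1}{\frac{n+m+1}{2}}.$$
   Context: For $A\subseteq\mathbb{R}$, $\chi_A$ denotes the characteristic function of $A$. Define functions $f_n:\mathbb{R}\to\mathbb{R}$, $n = 0,1,2,\dots$, recursively by $f_0 = \chi_{(-1/2,1/2)}$ and $f_{n+1}(x) = f_n(x+1/2) + f_n(x-1/2)$ for all $x\in\mathbb{R}$. *)

From HB Require Import structures.
From mathcomp Require Import all_boot all_order all_algebra.
From mathcomp Require Import all_classical all_reals all_analysis.
Set Implicit Arguments. Unset Strict Implicit. Unset Printing Implicit Defensive.
Import Order.TTheory GRing.Theory Num.Theory.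
Local Open Scope classical_set_scope.
Local Open Scope ring_scope.

Fixpoint f (R : realType) (n : nat) (x : R) : R :=
  match n with
  | 0%N => \1_(`] (- 2^-1), 2^-1 [) x
  | k.+1 => f k (x + 2^-1) + f k (x - 2^-1)
  end.

From HB Require Import structures.
From mathcomp Require Import all_boot all_order all_algebra.
From mathcomp Require Import all_classical all_reals all_analysis.
From mathcomp Require Import measurable_realfun.
From mathcomp Require Import ring lra zify.
Import Order.TTheory GRing.Theory Num.Theory.
Local Open Scope classical_set_scope.
Local Open Scope ring_scope.
Set Implicit Arguments. Unset Strict Implicit. Unset Printing Implicit Defensive.

(* Unfolding the recursion, f_n is a sum of binomially weighted indicators of
   unit intervals centred at k - n/2.  The overlap of two unit intervals with
   centres a and b has length max(0, 1 - |a - b|), so the integral is a double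
   binomial sum of such overlaps.  When n - m is odd the centres of f_n and f_m
   differ by half-integers, so only the pairs k = j + d and k = j + d + 1
   (where n = m + 2d + 1) contribute, each with weight 1/2; Pascal's rule merges
   them and Vandermonde's convolution evaluates the remaining sum. *)

Lemma sum_binomial_eq (n c : nat) :
  (\sum_(k < n.+1) 'C(n, k) * (k == c :> nat))%N = 'C(n, c).
Proof.
under eq_bigr do rewrite mulnbr.
rewrite -big_mkcond big_ord1_eq; case: ltnP => // lt_nc.
by rewrite bin_small.
Qed.

Lemma sum_binomial_consecutive (n l : nat) :
  (\sum_(k < n.+1) 'C(n, k) * ((k == l :> nat) + (k == l.+1 :> nat)))%N =
  'C(n.+1, l.+1).
Proof.
under eq_bigr do rewrite mulnDr.
by rewrite big_split /= !sum_binomial_eq addnC.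
Qed.

Lemma vandermonde_shift (m n c : nat) :
  (\sum_(j < m.+1) 'C(m, j) * 'C(n, j + c))%N = 'C(m + n, m + c).
Proof.
rewrite -binomial.Vandermonde.
pose F j := ('C(m, j) * 'C(n, m + c - j))%N.
have -> : (\sum_(j < (m + c).+1) F j = \sum_(j < m.+1) F j)%N.
  rewrite [RHS](big_ord_widen (m + c).+1 F) ?ltnS ?leq_addr // [RHS]big_mkcond.
  by apply: eq_bigr => j _; case: ltnP => // lt_mj; rewrite /F bin_small.
rewrite (reindex_inj rev_ord_inj) /=; apply: eq_bigr => j _.
have le_jm : (j <= m)%N := ltn_ord j.
by rewrite subSS bin_sub ?leq_subr // /F addnBAC.
Qed.

Lemma integral_indic_scale d (T : measurableType d) (R : realType)
    (mu : {measure set T -> \bar R}) (k : R) (S : set T) :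
  0 <= k -> measurable S ->
  (\int[mu]_(x in [set: T]) (k * \1_S x)%:E = k%:E * mu S)%E.
Proof.
move=> k0 mS; rewrite (@integralZl_indic _ _ _ _ _ measurableT (fun=> S)) //.
  by rewrite integral_indic // setIT.
by rewrite ltNge k0.
Qed.

Section UnitIntervals.
Variable R : realType.

Definition unit_itv (c : R) : set R := `](c - 2^-1), (c + 2^-1)[.

Lemma in_unit_itv (c x : R) : (x \in unit_itv c) = (c - 2^-1 < x < c + 2^-1).
Proof. by rewrite /unit_itv mem_setE in_itv. Qed.

Lemma indic_unit_itvD (c x y : R) :
  \1_(unit_itv c) (x + y) = \1_(unit_itv (c - y)) x :> R.
Proof.
rewrite !indicE !in_unit_itv; congr ((_ : bool)%:R).
by apply/idP/idP => /andP[? ?]; apply/andP; split; lra.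
Qed.

Definition tent (t : R) : R := if `|t| < 1 then 1 - `|t| else 0.

Lemma lebesgue_measure_unit_itvI (a b : R) :
  lebesgue_measure (unit_itv a `&` unit_itv b) = (tent (a - b))%:E.
Proof.
wlog ab : a b / a <= b.
  move=> W; case: (leP a b) => [/W//|/ltW/W].
  by rewrite setIC /tent distrC.
have -> : unit_itv a `&` unit_itv b = [set` `](b - 2^-1), (a + 2^-1)[].
  apply/seteqP; split => y /=.
    by case=> /mem_set + /mem_set; rewrite !in_unit_itv in_itv /= =>
      /andP[? ?] /andP[? ?]; apply/andP; split; lra.
  rewrite in_itv /= => /andP[? ?].
  by split; apply/set_mem; rewrite in_unit_itv; apply/andP; split; lra.
rewrite lebesgue_measure_itv /= lte_fin /tent distrC ger0_norm ?subr_ge0 //.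
have -> : (b - 2^-1 < a + 2^-1) = (b - a < 1) by apply/idP/idP; lra.
by case: ifP => // _; rewrite -EFinB; congr (_%:E); lra.
Qed.

Lemma tent_half_shift (k l : nat) :
  tent (k%:R - l%:R - 2^-1) = 2^-1 * ((k == l) + (k == l.+1))%:R.
Proof.
have far t : 1 <= `|t| -> tent t = 0 by rewrite /tent ltNge => ->.
have half t : `|t| = 2^-1 -> tent t = 2^-1 by rewrite /tent => ->; rewrite ifT; lra.
have [kl|lk|->] := ltngtP k l.
- have kl' : k%:R + 1 <= l%:R :> R by rewrite natr1 ler_nat.
  rewrite far; last by rewrite ler_normr; apply/orP; right; lra.
  by rewrite (ltn_eqF (leqW kl)) mulr0.
- have [kl1|->] : (l.+1 < k)%N \/ k = l.+1 by lia.
  + have lk' : l%:R + 2 <= k%:R :> R by rewrite -natrD ler_nat addn2.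
    rewrite far; last by rewrite ler_normr; apply/orP; left; lra.
    by rewrite (gtn_eqF kl1) mulr0.
  + rewrite half; first by rewrite eqxx mulr1.
    by rewrite -natr1 ger0_norm; lra.
- rewrite half; first by rewrite (ltn_eqF (ltnSn l)) mulr1.
  by rewrite subrr sub0r normrN ger0_norm.
Qed.

Definition center (n k : nat) : R := k%:R - n%:R * 2^-1.

Lemma f_binomial_sum (n : nat) (x : R) :
  f n x = \sum_(k < n.+1) 'C(n, k)%:R * \1_(unit_itv (center n k)) x.
Proof.
elim: n x => [|n IHn] x.
  by rewrite big_ord1 bin0 mul1r /center /unit_itv !mul0r subr0 sub0r add0r.
have shiftl k : \1_(unit_itv (center n k)) (x + 2^-1) =
                \1_(unit_itv (center n.+1 k)) x :> R.
  rewrite indic_unit_itvD /center -(@natr1 R n).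
  by congr (\1_(unit_itv _) x); lra.
have shiftr k : \1_(unit_itv (center n k)) (x - 2^-1) =
                \1_(unit_itv (center n.+1 k.+1)) x :> R.
  rewrite indic_unit_itvD /center -(@natr1 R n) -(@natr1 R k).
  by congr (\1_(unit_itv _) x); lra.
rewrite /= !IHn.
under [X in X + _ = _]eq_bigr do rewrite shiftl.
under [X in _ + X = _]eq_bigr do rewrite shiftr.
rewrite [RHS]big_ord_recl.
under [X in _ = _ + X]eq_bigr do rewrite lift0 binS natrD mulrDl.
rewrite big_split /= addrA; congr (_ + _).
by rewrite [LHS]big_ord_recl [in RHS]big_ord_recr /= (@bin_small n n.+1) //
  mulr0n mul0r addr0 !bin0.
Qed.

Lemma integral_f_mul (n m : nat) :
  (\int[@lebesgue_measure R]_(x in [set: R]) (f n x * f m x)%:E =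
   (\sum_(k < n.+1) \sum_(j < m.+1)
      ('C(n, k) * 'C(m, j))%:R * tent (center n k - center m j))%:E)%E.
Proof.
pose I (p : 'I_n.+1 * 'I_m.+1) :=
  unit_itv (center n p.1) `&` unit_itv (center m p.2).
have mI p : measurable (I p) by apply: measurableI; exact: measurable_itv.
have -> : (fun x => (f n x * f m x)%:E) =
          (fun x => \sum_(p : 'I_n.+1 * 'I_m.+1)
                      (('C(n, p.1) * 'C(m, p.2))%:R * \1_(I p) x)%:E)%E.
  apply/funext => x; rewrite sumEFin !f_binomial_sum big_distrlr pair_big /=.
  by congr (_%:E); apply: eq_bigr => p _; rewrite indicI natrM mulrACA.
rewrite ge0_integral_sum //; last first.
  move=> p; apply/measurable_EFinP/measurable_funM => //.
  by apply: measurable_indic; exact: mI.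
rewrite pair_big -sumEFin; apply: eq_bigr => p _.
rewrite integral_indic_scale //; last exact: mI.
(* The measure occurs through its structure coercion here, so the rewrite
   needs an explicit occurrence pattern. *)
by rewrite [X in (_ * X)%E = _]lebesgue_measure_unit_itvI.
Qed.

Lemma center_sub (m d k j : nat) :
  center (m + d.*2).+1 k - center m j = k%:R - (j + d)%:R - 2^-1.
Proof. rewrite /center -addn1 -muln2 !natrD natrM; lra. Qed.

Lemma sum_binomial_tent (m d : nat) (n := (m + d.*2).+1) :
  \sum_(k < n.+1) \sum_(j < m.+1)
      ('C(n, k) * 'C(m, j))%:R * tent (center n k - center m j) =
  2^-1 * 'C(n + m + 1, m + d + 1)%:R.
Proof.
have -> : (n + m + 1 = m + n.+1)%N by lia.
have -> : (m + d + 1 = m + (d + 1))%N by lia.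
rewrite -vandermonde_shift natr_sum mulr_sumr exchange_big /=.
apply: eq_bigr => j _; rewrite addnA addn1 -sum_binomial_consecutive.
rewrite natrM natr_sum !mulr_sumr; apply: eq_bigr => k _.
rewrite center_sub tent_half_shift !natrM; ring.
Qed.

End UnitIntervals.

Theorem mainTheorem6 (R : realType) (n m : nat) :
  (m <= n)%N -> odd (n - m) ->
  (\int[@lebesgue_measure R]_(x in [set: R]) (f n x * f m x)%:E =
   (2^-1 * ('C(n + m + 1, (n + m + 1) %/ 2))%:R)%:E)%E.
Proof.
move=> le_mn odd_nm.
have [d ->] : exists d, n = (m + d.*2).+1.
  by exists (n - m)./2; move: (odd_double_half (n - m)); rewrite odd_nm; lia.
have -> : (((m + d.*2).+1 + m + 1) %/ 2 = m + d + 1)%N by lia.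
by rewrite integral_f_mul sum_binomial_tent.
Qed.
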